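(* Assume the realizability condition below. Then for each $h$, the class $$\mathcal F_h(\Upsilon_{h-1})=\{d_h=\langle\mu_{h-1},\theta_h\rangle:\mu_{h-1}\in\Upsilon_{h-1},\theta_h\in\mathbb R^{\mathsf d},\|\theta_h\|_\infty\le1,d_h\in\Delta(\mathcal X)\}$$ has an $\ell_1$ optimistic cover $\bar{\mathcal F}_h(\Upsilon_{h-1})$ of scale $\gamma$ with $|\bar{\mathcal F}_h(\Upsilon_{h-1})|\le|\Upsilon_{h-1}|(2\lceil B^\mu/\gamma\rceil)^{\mathsf d}$ and $\bar{\mathcal F}_h(\Upsilon_{h-1})\subseteq(\mathcal X\to\mathbb R_{\ge0})$.
   Context: Realizability: $\Upsilon=\bigcup_h\Upsilon_h$ is a finite class of maps $\mu_h:\mathcal X\to\mathbb R^{\mathsf d}$ ($\mathcal X$ a measurable space) containing the true low-rank MDP density features $\mu^*_h\in\Upsilon_h$, with $\int\|\mu_h(x)\|_1\,\mathrm dx\le B^\mu$ for every $\mu_h\in\Upsilon_h$. $\ell_1$ optimistic cover of scale $\gamma$ of a class $\mathcal F$: a class $\bar{\mathcal F}$ (not necessarily inside $\mathcal F$) such that for every $f\in\mathcal F$ there is $\bar f\in\bar{\mathcal F}$ with $\|f-\bar f\|_1\le\gamma$ and $f\le\bar f$ pointwise. *)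

From HB Require Import structures.
From mathcomp Require Import all_boot all_order all_algebra.
From mathcomp Require Import all_classical all_reals all_analysis.
Set Implicit Arguments. Unset Strict Implicit. Unset Printing Implicit Defensive.
Import Order.TTheory GRing.Theory Num.Theory.
Local Open Scope classical_set_scope.
Local Open Scope ring_scope.

Definition l1norm (R : realType) (d : nat) (v : 'rV[R]_d) : R :=
  \sum_(i < d) `|v ord0 i|.

Definition inner (R : realType) (d : nat) (v w : 'rV[R]_d) : R :=
  \sum_(i < d) v ord0 i * w ord0 i.

Definition linf_le1 (R : realType) (d : nat) (th : 'rV[R]_d) : Prop :=
  forall i : 'I_d, `|th ord0 i| <= 1.

Definition is_density (dX : measure_display) (X : measurableType dX)
  (R : realType) (mu : {measure set X -> \bar R}) (f : X -> R) : Prop :=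
  [/\ measurable_fun setT f, (forall x, 0 <= f x) &
      (\int[mu]_x (f x)%:E = 1)%E].

Definition l1dist (dX : measure_display) (X : measurableType dX)
  (R : realType) (mu : {measure set X -> \bar R}) (f g : X -> R) : \bar R :=
  (\int[mu]_x (`|f x - g x|)%:E)%E.

Definition Fclass (dX : measure_display) (X : measurableType dX)
  (R : realType) (mu : {measure set X -> \bar R}) (d : nat)
  (Ups : set (X -> 'rV[R]_d)) : set (X -> R) :=
  [set f | exists m, exists th : 'rV[R]_d,
     [/\ Ups m, linf_le1 th, f = (fun x => inner (m x) th) & is_density mu f]].

Definition optimistic_cover (dX : measure_display) (X : measurableType dX)
  (R : realType) (mu : {measure set X -> \bar R})
  (F Fbar : set (X -> R)) (gamma : R) : Prop :=
  forall f, F f -> exists2 g, Fbar g &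
    (l1dist mu f g <= gamma%:E)%E /\ (forall x, f x <= g x).

From HB Require Import structures.
From mathcomp Require Import all_boot all_order all_algebra.
From mathcomp Require Import all_classical all_reals all_analysis.
From mathcomp Require Import ring lra measurable_realfun.
Set Implicit Arguments.
Unset Strict Implicit.
Unset Printing Implicit Defensive.
Import Order.TTheory GRing.Theory Num.Theory.
Local Open Scope classical_set_scope.
Local Open Scope ring_scope.
Local Open Scope card_scope.

(* Round every coordinate of theta to the centre of one of k equal cells of
   [-1, 1].  The rounded vector theta' is within 1/k of theta coordinatewise,
   so <mu x, theta> and <mu x, theta'> differ by at most |mu x|_1 / k.  Hence
   max (0, <mu x, theta'> + |mu x|_1 / k) lies above the density
   <mu x, theta> and exceeds it by at most 2 |mu x|_1 / k, whose integral is
   at most 2 B / k <= gamma for k = 2 ceil (B / gamma); a density in the class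
   forces B >= 1, so k > 0.  There are |Upsilon| k^d such functions. *)

Lemma card_le_II_image T (A : set T) (a0 : T) (N : nat) :
  A #<= `I_N -> exists u : nat -> T, A `<=` u @` `I_N.
Proof.
case/pfcard_geP => [->|/surjfunPex[u ->]]; last by exists u.
by exists (fun=> a0); exact: sub0set.
Qed.

Lemma card_range_le (T : finType) U (f : T -> U) : range f #<= `I_#|T|.
Proof.
have -> : range f = (f \o enum_val) @` [set: 'I_#|T|].
  apply/seteqP; split=> _ [x _ <-]; last by exists (enum_val x).
  by exists (enum_rank x) => //=; rewrite enum_rankK.
apply: card_le_trans (card_image_le _ _) _.
by have /card_eqPle[] := @card_II #|T|.
Qed.

Section VectorBounds.
Variables (R : realType) (d : nat).
Implicit Types (v a b : 'rV[R]_d).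

Lemma l1norm_ge0 v : 0 <= l1norm v.
Proof. exact: sumr_ge0. Qed.

Lemma inner_le_l1norm v a : linf_le1 a -> inner v a <= l1norm v.
Proof.
move=> a1; apply: ler_sum => i _; apply: le_trans (ler_norm _) _.
by rewrite normrM -[leRHS]mulr1 ler_wpM2l.
Qed.

Lemma normr_inner_sub v a b (e : R) :
  (forall i, `|a ord0 i - b ord0 i| <= e) ->
  `|inner v a - inner v b| <= l1norm v * e.
Proof.
move=> ab; rewrite /inner /l1norm -sumrB mulr_suml.
apply: le_trans (ler_norm_sum _ _ _) _; apply: ler_sum => i _.
by rewrite -mulrBr normrM ler_wpM2l.
Qed.

End VectorBounds.

Section Grid.
Variable R : realType.

Lemma nat_bracket (k : nat) (z : R) :
  (0 < k)%N -> 0 <= z <= k%:R -> exists j : 'I_k, j%:R <= z <= j%:R + 1.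
Proof.
move=> k0 /andP[z0 zk]; have /andP[tz zt] := truncn_itv z0.
case: (ltnP (Num.truncn z) k) => [tk|kt].
  by exists (Ordinal tk); rewrite /= tz natr1 ltW.
case: k k0 kt zk => // k _ kt zk; exists ord_max => /=.
rewrite natr1 zk andbT; apply: le_trans tz.
by rewrite ler_nat ltnW.
Qed.

Definition grid_point (k j : nat) : R := -1 + (2 * j%:R + 1) / k%:R.

Lemma grid_point_near (k : nat) (y : R) : (0 < k)%N -> `|y| <= 1 ->
  exists j : 'I_k, `|y - grid_point k j| <= k%:R^-1.
Proof.
move=> k0; rewrite ler_norml => /andP[y_ge y_le].
have kpos : (0 : R) < k%:R by rewrite ltr0n.
set z := (y + 1) * k%:R / 2.
have [j /andP[jz zj]] : exists j : 'I_k, j%:R <= z <= j%:R + 1.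
  apply: nat_bracket => //; apply/andP; split.
    by rewrite divr_ge0 // mulr_ge0 //; lra.
  by rewrite ler_pdivrMr // mulrC ler_pM2l //; lra.
exists j; have -> : y - grid_point k j = (2 * (z - j%:R) - 1) * k%:R^-1.
  by rewrite /z /grid_point; field; rewrite lt0r_neq0.
rewrite normrM normfV (gtr0_norm kpos) -[leRHS]mul1r ler_pM2r ?invr_gt0 //.
by rewrite ler_norml; apply/andP; split; lra.
Qed.

Definition grid_vector (d k : nat) (t : {ffun 'I_d -> 'I_k}) : 'rV[R]_d :=
  \row_i grid_point k (t i).

Lemma grid_vector_near (d k : nat) (a : 'rV[R]_d) : (0 < k)%N -> linf_le1 a ->
  exists t : {ffun 'I_d -> 'I_k},
    forall i, `|a ord0 i - grid_vector t ord0 i| <= k%:R^-1.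
Proof.
move=> k0 a1; have /fin_all_exists[t tP] : forall i : 'I_d,
    exists j : 'I_k, `|a ord0 i - grid_point k j| <= k%:R^-1.
  by move=> i; exact: grid_point_near.
by exists [ffun i => t i] => i; rewrite mxE ffunE.
Qed.

Definition grid_size (r : R) : nat := (2 * `|Num.ceil r|)%N.

Lemma grid_size_gt0 (r : R) : 0 < r -> (0 < grid_size r)%N.
Proof. by move=> r0; rewrite muln_gt0 absz_gt0 gt_eqF ?ceil_gt0. Qed.

Lemma grid_size_natr (r : R) :
  0 <= r -> (grid_size r)%:R = 2 * (Num.ceil r)%:~R :> R.
Proof.
by move=> r0; rewrite natrM natr_absz ger0_norm // ceil_ge0 (lt_le_trans _ r0).
Qed.

Lemma grid_size_step (B gamma : R) : 0 < B -> 0 < gamma ->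
  2 / (grid_size (B / gamma))%:R * B <= gamma.
Proof.
move=> B0 g0; have r0 : 0 < B / gamma by rewrite divr_gt0.
have k0 : (0 : R) < (grid_size (B / gamma))%:R by rewrite ltr0n grid_size_gt0.
rewrite mulrAC ler_pdivrMr // grid_size_natr ?(ltW r0) //.
have -> : 2 * B = gamma * (2 * (B / gamma)) by field; rewrite gt_eqF.
by rewrite ler_pM2l // ler_pM2l // ceil_ge.
Qed.

End Grid.

Definition upper_envelope (R : realType) (d k : nat) (v a : 'rV[R]_d) : R :=
  Num.max 0 (inner v a + l1norm v / k%:R).

Section UpperEnvelope.
Variables (R : realType) (d k : nat) (v a b : 'rV[R]_d).
Hypothesis ab : forall i, `|a ord0 i - b ord0 i| <= k%:R^-1.

Lemma inner_le_upper_envelope : inner v a <= upper_envelope k v b.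
Proof.
have := normr_inner_sub v ab; rewrite ler_norml => /andP[_ le_ab].
by rewrite le_max; apply/orP; right; lra.
Qed.

Lemma upper_envelope_sub_le : 0 <= inner v a ->
  upper_envelope k v b - inner v a <= 2 / k%:R * l1norm v.
Proof.
have := normr_inner_sub v ab; rewrite ler_norml => /andP[ge_ab le_ab] a0.
by rewrite /upper_envelope max_r; lra.
Qed.

End UpperEnvelope.

Section L1Cover.
Variables (dX : measure_display) (X : measurableType dX) (R : realType).
Variables (mu : {measure set X -> \bar R}) (d : nat).

Lemma l1dist_le_integral (f g h : X -> R) :
  measurable_fun setT f -> measurable_fun setT g -> measurable_fun setT h ->
  (forall x, `|f x - g x| <= h x) -> (l1dist mu f g <= \int[mu]_x (h x)%:E)%E.
Proof.
move=> mf mg mh fgh; apply: ge0_le_integral => //.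
- apply/measurable_EFinP.
  apply: measurableT_comp; first exact: normr_measurable.
  exact: measurable_funB.
- exact/measurable_EFinP.
- by move=> x _; rewrite lee_fin.
Qed.

Variable m : X -> 'rV[R]_d.
Hypothesis m_meas : forall i : 'I_d, measurable_fun setT (fun x => m x ord0 i).

Lemma measurable_l1norm : measurable_fun setT (fun x => l1norm (m x)).
Proof.
apply: measurable_sum => i.
by apply: measurableT_comp; [exact: normr_measurable | exact: m_meas].
Qed.

Lemma measurable_inner (a : 'rV[R]_d) :
  measurable_fun setT (fun x => inner (m x) a).
Proof. by apply: measurable_sum => i; apply: measurable_funM. Qed.

Lemma measurable_upper_envelope (k : nat) (a : 'rV[R]_d) :
  measurable_fun setT (fun x => upper_envelope k (m x) a).
Proof.
apply: measurable_maxr => //.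
apply: measurable_funD; first exact: measurable_inner.
by apply: measurable_funM => //; exact: measurable_l1norm.
Qed.

Lemma integral_l1norm_ge1 (a : 'rV[R]_d) : linf_le1 a ->
  is_density mu (fun x => inner (m x) a) ->
  (1 <= \int[mu]_x (l1norm (m x))%:E)%E.
Proof.
move=> a1 [mf f0 <-]; apply: ge0_le_integral => //.
- by move=> x _; rewrite lee_fin.
- exact/measurable_EFinP.
- exact/measurable_EFinP/measurable_l1norm.
- by move=> x _; rewrite lee_fin inner_le_l1norm.
Qed.

Lemma grid_cover_density (B gamma : R) (a : 'rV[R]_d) :
  (\int[mu]_x (l1norm (m x))%:E <= B%:E)%E -> 0 < gamma -> linf_le1 a ->
  is_density mu (fun x => inner (m x) a) ->
  let k := grid_size (B / gamma) in
  exists t : {ffun 'I_d -> 'I_k},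
    (l1dist mu (fun x => inner (m x) a)
       (fun x => upper_envelope k (m x) (grid_vector R t)) <= gamma%:E)%E /\
    (forall x, inner (m x) a <= upper_envelope k (m x) (grid_vector R t)).
Proof.
move=> mB g0 a1 fa k.
have B1 : 1 <= B by rewrite -lee_fin (le_trans (integral_l1norm_ge1 a1 fa)).
have k0 : (0 < k)%N by rewrite grid_size_gt0 // divr_gt0 // (lt_le_trans ltr01).
have [t close] := grid_vector_near k0 a1.
exists t; split; last by move=> x; exact: inner_le_upper_envelope.
pose h x := 2 / k%:R * l1norm (m x).
apply: le_trans (l1dist_le_integral (h := h) _ _ _ _) _.
- exact: measurable_inner.
- exact: measurable_upper_envelope.
- by apply: measurable_funM => //; exact: measurable_l1norm.
- move=> x; rewrite distrC ger0_norm ?subr_ge0 ?inner_le_upper_envelope //.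
  by case: fa => _ f0 _; exact: upper_envelope_sub_le.
under eq_integral do rewrite EFinM.
rewrite ge0_integralZl_EFin ?divr_ge0 //; last 2 first.
- by move=> x _; rewrite lee_fin l1norm_ge0.
- exact/measurable_EFinP/measurable_l1norm.
apply: le_trans (lee_wpmul2l _ mB) _; first by rewrite lee_fin divr_ge0.
by rewrite -EFinM lee_fin grid_size_step // (lt_le_trans ltr01 B1).
Qed.

End L1Cover.

Theorem lemma13 (dX : measure_display) (X : measurableType dX) (R : realType)
  (mu : {measure set X -> \bar R}) (d : nat)
  (Ups : set (X -> 'rV[R]_d)) (N : nat) (Bmu gamma : R) :
  (Ups #= `I_N)%card ->
  (forall m, Ups m -> forall i : 'I_d, measurable_fun setT (fun x => m x ord0 i)) ->
  (forall m, Ups m -> (\int[mu]_x (l1norm (m x))%:E <= Bmu%:E)%E) ->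
  0 < gamma ->
  exists Fbar : set (X -> R),
    [/\ optimistic_cover mu (Fclass mu Ups) Fbar gamma,
        (exists M : nat, (Fbar #<= `I_M)%card /\
           (M%:R <= N%:R * (2 * (Num.ceil (Bmu / gamma))%:~R) ^+ d :> R)) &
        (forall g, Fbar g -> forall x, 0 <= g x)].
Proof.
move=> /card_eqPle[Ups_le_N N_le_Ups] Ups_meas Ups_int gamma0.
have [u Ups_u] := card_le_II_image (fun _ : X => 0 : 'rV[R]_d) Ups_le_N.
set k := grid_size (Bmu / gamma).
pose envelope (q : 'I_N * {ffun 'I_d -> 'I_k}) x :=
  upper_envelope k (u q.1 x) (grid_vector R q.2).
exists (range envelope); split.
- move=> _ [m [a [Um a1 -> fa]]]; have [n /= ltnN un_m] := Ups_u m Um.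
  have [t [dist_le le_env]] :=
    grid_cover_density (Ups_meas _ Um) (Ups_int _ Um) gamma0 a1 fa.
  subst m; exists (envelope (Ordinal ltnN, t)); last by split.
  by exists (Ordinal ltnN, t).
- exists #|{: 'I_N * {ffun 'I_d -> 'I_k}}|; split; first exact: card_range_le.
  rewrite card_prod card_ffun !card_ord natrM natrX.
  have [->|N0] := posnP N; first by rewrite !mul0r.
  have [m0 Um0] : Ups !=set0.
    apply/set0P/negP => /eqP Ups0; move: N_le_Ups; rewrite Ups0.
    by move/card_le0P/seteqP => [/(_ 0%N N0)].
  have Bmu0 : 0 <= Bmu.
    rewrite -lee_fin (le_trans _ (Ups_int _ Um0)) // integral_ge0 // => x _.
    by rewrite lee_fin l1norm_ge0.
  by rewrite grid_size_natr // divr_ge0 // ltW.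
- by move=> _ [q _ <-] x; rewrite le_max lexx.
Qed.
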